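(* Let $G$, $\rho$, $H$, $\{U_i\}_{i\in I}$, $\sigma$, $C$ be as in the context, and let $I_k\subseteq I$ be an orbit of $\sigma$, with a fixed element $0\in I_k$. Suppose we are given a tight compatible encoding scheme for $I_k$ on $C$, i.e. open subsets $\{D^k_i\}_{i\in I_k}$ of $C$ which are pairwise disjoint and cover $C$ up to a set of $\mu_C$-measure zero, such that $h\cdot D^k_i = D^k_{\sigma(i,h^{-1})}$ for all $h\in H$, $i\in I_k$, and set $E^k_i:=D^k_i$ for all $i\in I_k$. For $i\in I_k$ choose $c_i\in H$ with $c_i\cdot E^k_0=E^k_i$. For $x\in C$ lying in $D^k_j$ write $U(x):=U_j$ (defined for $\mu_C$-almost every $x$). For $i\in I_k$ define the channel $$\mathcal T^k_i(\tau):=\frac{1}{\mu_C(E^k_i)}\int_{G\times C} dg\,dx\;\mathbb 1_{E^k_i}(x)\,\big[\rho(g)^\dagger U(g\cdot x)\rho(g)\,U_i^\dagger\big](\tau)$$ on density matrices $\tau$ on $V$ (this is the effective channel, in Alice's frame, of the tight teleportation procedure when Alice obtains measurement result $i$ and sends a uniformly random reading $x\in E^k_i$, Bob receives $g\cdot x$ and applies $U(g\cdot x)$, with $g$ Haar-distributed). Then $$\mathcal T^k_i=\frac{|I_k|}{\mu_C(E^k_0)}\,[\rho(c_i)]\circ\left(\int_G dg\;p(g)\,\big[\rho(g)^\dagger U_0\rho(g)U_0^\dagger\big]\right)\circ[\rho(c_i)^\dagger],$$ where $p(g):=\int_{C}dx\,\mathbb 1_{E^k_0}(x)\,\mathbb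 1_{D^k_0}(g\cdot x)=\mu_C\big(E^k_0\cap g^{-1}\cdot D^k_0\big)$.
   Context: $G$ is a compact Lie group with normalised Haar measure $dg$, and $\rho:G\to U(V)$ is a unitary representation on a Hilbert space $V\cong\mathbb C^d$. For an operator $M$ on $V$, $[M]$ denotes the map $\tau\mapsto M\tau M^\dagger$, and $\circ$ is composition of maps. A unitary error basis (UEB) is a family $\{U_i\}_{i\in I}$, $|I|=d^2$, of unitaries on $V$ with $\frac1d\mathrm{Tr}(U_i^\dagger U_j)=\delta_{ij}$. $H\subseteq G$ is a finite subgroup and $\{U_i\}_{i\in I}$ is $H$-equivariant: there is a right action $\sigma:I\times H\to I$ and phases $\alpha(i,h)\in U(1)$ with $\rho(h)^\dagger U_i\rho(h)=\alpha(i,h)U_{\sigma(i,h)}$ for all $h\in H$, $i\in I$. $C$ is a smooth manifold with a normalised measure $\mu_C$ (written $dx$) carrying a smooth, measure-preserving left action $G\times C\to C$, $(g,x)\mapsto g\cdot x$. $\mathbb 1_S$ denotes the indicator function of a set $S$. *)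

From HB Require Import structures.
From mathcomp Require Import all_boot all_order all_algebra.
From mathcomp Require Import all_classical all_reals.
From mathcomp Require Import ereal measure numfun lebesgue_measure lebesgue_integral probability.
From mathcomp Require Import complex.

Set Implicit Arguments.
Unset Strict Implicit.
Unset Printing Implicit Defensive.

Import Order.TTheory GRing.Theory Num.Theory.
Local Open Scope classical_set_scope.
Local Open Scope ring_scope.

Definition cintegral d (T : measurableType d) (R : realType)
  (mu : {measure set T -> \bar R}) (f : T -> R[i]) : R[i] :=
  Complex (Rintegral mu setT (fun t => complex.Re (f t)))
          (Rintegral mu setT (fun t => complex.Im (f t))).

Definition mxintegral d (T : measurableType d) (R : realType)
  (mu : {measure set T -> \bar R}) m n (F : T -> 'M[R[i]]_(m, n)) :
  'M[R[i]]_(m, n) :=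
  \matrix_(a < m, b < n) cintegral mu (fun t => F t a b).

Definition mxadj (R : rcfType) m n (M : 'M[R[i]]_(m, n)) : 'M[R[i]]_(n, m) :=
  (map_mx (@conjc R) M)^T.

(* The superoperator [M] : tau |-> M tau M^dagger. *)
Definition conjmap (R : rcfType) n (M : 'M[R[i]]_n) (tau : 'M[R[i]]_n) :
  'M[R[i]]_n := M *m tau *m mxadj M.

Definition complex_of_real (R : rcfType) (r : R) : R[i] := Complex r 0.

(* U(x) := U_j for x in D_j (j in I_k).  Since the D_j are pairwise disjoint
   this is the sum of 1_{D_j}(x) U_j; it is 0 off the union of the D_j,
   a mu_C-null set, where the paper leaves U(x) undefined. *)
Definition Ureading (R : realType) (C : Type) (I : finType) (n : nat) (Ik : {set I})
  (D : I -> set C) (U : I -> 'M[R[i]]_n) (x : C) : 'M[R[i]]_n :=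
  \sum_(j in Ik) complex_of_real (\1_(D j) x) *: U j.

(* Since the cells D_j are disjoint, the integrand at (g, x) is the sum over j of
   1[x in D_i, g.x in D_j] [rho(g)^+ U_j rho(g) U_i^+], and Fubini integrates x out,
   leaving mu_C(D_i /\ g^-1 D_j) as the weight of the j-th term.  The substitution
   g := c_j g c_i^-1, harmless for the two-sided invariant Haar measure, turns this
   weight into p(g) (because D_j = c_j D_0 and the action preserves mu_C) and the
   Kraus operator into rho(c_i) (rho(g)^+ U_0 rho(g) U_0^+) rho(c_i)^+ times the unit
   phase alpha_j(c_j) alpha_i(c_i)^*, by equivariance of the error basis and
   sigma(j, c_j) = 0.  Hence all |I_k| terms agree, and mu_C(E_i) = mu_C(E_0). *)

From HB Require Import structures.
From mathcomp Require Import all_boot all_order all_algebra.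
From mathcomp Require Import all_classical all_reals.
From mathcomp Require Import ereal measure numfun lebesgue_measure lebesgue_integral probability.
From mathcomp Require Import measurable_realfun complex.

Set Implicit Arguments.
Unset Strict Implicit.
Unset Printing Implicit Defensive.

Import Order.TTheory GRing.Theory Num.Theory.
Local Open Scope classical_set_scope.
Local Open Scope ring_scope.

Local Notation Re := complex.Re.
Local Notation Im := complex.Im.

(* Bounded measurable functions: integrable for every finite measure and closed
   under products, which is all the integrands below need. *)
Definition bmfun {d} {T : measurableType d} {R : realType} (f : T -> R) :=
  measurable_fun setT f /\ exists M, forall x, `|f x| <= M.

Definition cbmfun {d} {T : measurableType d} {R : realType} (f : T -> R[i]) :=
  bmfun (fun x => Re (f x)) /\ bmfun (fun x => Im (f x)).

Definition mxbmfun {d} {T : measurableType d} {R : realType} m n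
    (F : T -> 'M[R[i]]_(m, n)) :=
  forall a b, cbmfun (fun t => F t a b).

Section BoundedMeasurable.
Context {d : measure_display} {T : measurableType d} {R : realType}.
Implicit Types f g : T -> R.

Lemma bmfun_eq {f g} : bmfun f -> f =1 g -> bmfun g.
Proof. by move=> + /funext <-. Qed.

Lemma bmfun_cst (r : R) : bmfun (fun _ : T => r).
Proof. by split; [exact: measurable_cst | exists `|r|]. Qed.

Lemma bmfunD f g : bmfun f -> bmfun g -> bmfun (fun x => f x + g x).
Proof.
move=> [mf [M hM]] [mg [N hN]]; split; first exact: measurable_funD.
by exists (M + N) => x; rewrite (le_trans (ler_normD _ _)) ?lerD.
Qed.

Lemma bmfunN f : bmfun f -> bmfun (fun x => - f x).
Proof.
move=> [mf [M hM]]; split; first exact: measurableT_comp.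
by exists M => x; rewrite normrN.
Qed.

Lemma bmfunM f g : bmfun f -> bmfun g -> bmfun (fun x => f x * g x).
Proof.
move=> [mf [M hM]] [mg [N hN]]; split; first exact: measurable_funM.
by exists (M * N) => x; rewrite normrM ler_pM.
Qed.

Lemma bmfun_comp {d'} {T' : measurableType d'} (phi : T' -> T) f :
  measurable_fun setT phi -> bmfun f -> bmfun (f \o phi).
Proof.
move=> mphi [mf [M hM]]; split; first exact: measurableT_comp.
by exists M => x; apply: hM.
Qed.

Lemma bmfun_indic (A : set T) : measurable A -> bmfun (\1_A : T -> R).
Proof.
move=> mA; split; first exact: measurable_indic.
by exists 1 => x; rewrite /indic; case: (x \in A); rewrite ?normr1 ?normr0.
Qed.

Lemma bmfun_integrable (mu : {measure set T -> \bar R}) f :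
  (mu setT < +oo)%E -> bmfun f -> mu.-integrable setT (EFin \o f).
Proof.
move=> mu_fin [mf [M hM]]; apply: measurable_bounded_integrable => //.
exists M; split; first by rewrite num_real.
by move=> y hy x _; apply: le_trans (hM x) (ltW hy).
Qed.

End BoundedMeasurable.

Section ComplexBoundedMeasurable.
Context {d : measure_display} {T : measurableType d} {R : realType}.
Implicit Types f g : T -> R[i].

Lemma cbmfun_eq {f g} : cbmfun f -> f =1 g -> cbmfun g.
Proof. by move=> + /funext <-. Qed.

Lemma cbmfun_cst (z : R[i]) : cbmfun (fun _ : T => z).
Proof. by split; apply: bmfun_cst. Qed.

Lemma cbmfun_real (r : T -> R) : bmfun r -> cbmfun (fun x => complex_of_real (r x)).
Proof. by move=> hr; split => //; apply: bmfun_cst. Qed.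

Lemma cbmfunD f g : cbmfun f -> cbmfun g -> cbmfun (fun x => f x + g x).
Proof.
move=> [f1 f2] [g1 g2]; split.
- by apply: bmfun_eq (bmfunD f1 g1) _ => x; case: (f x); case: (g x).
- by apply: bmfun_eq (bmfunD f2 g2) _ => x; case: (f x); case: (g x).
Qed.

Lemma cbmfunM f g : cbmfun f -> cbmfun g -> cbmfun (fun x => f x * g x).
Proof.
move=> [f1 f2] [g1 g2]; split.
- apply: bmfun_eq (bmfunD (bmfunM f1 g1) (bmfunN (bmfunM f2 g2))) _ => x.
  by case: (f x); case: (g x).
- apply: bmfun_eq (bmfunD (bmfunM f1 g2) (bmfunM f2 g1)) _ => x.
  by case: (f x); case: (g x).
Qed.

Lemma cbmfunZ (k : R[i]) f : cbmfun f -> cbmfun (fun x => k * f x).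
Proof. exact: cbmfunM (cbmfun_cst k). Qed.

Lemma cbmfun_conj f : cbmfun f -> cbmfun (fun x => (f x)^*).
Proof.
move=> [f1 f2]; split; first by apply: bmfun_eq f1 _ => x; case: (f x).
by apply: bmfun_eq (bmfunN f2) _ => x; case: (f x).
Qed.

Lemma cbmfun_comp {d'} {T' : measurableType d'} (phi : T' -> T) f :
  measurable_fun setT phi -> cbmfun f -> cbmfun (f \o phi).
Proof.
by move=> mphi [f1 f2]; split; [exact: bmfun_comp mphi f1 | exact: bmfun_comp mphi f2].
Qed.

Lemma cbmfun_sum (J : Type) (s : seq J) (P : pred J) (F : J -> T -> R[i]) :
  (forall j, P j -> cbmfun (F j)) -> cbmfun (fun x => \sum_(j <- s | P j) F j x).
Proof.
move=> hF; elim: s => [|a s IH].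
  by apply: cbmfun_eq (cbmfun_cst 0) _ => x; rewrite big_nil.
rewrite /= in IH *; case hP: (P a).
  by apply: cbmfun_eq (cbmfunD (hF a hP) IH) _ => x; rewrite big_cons hP.
by apply: cbmfun_eq IH _ => x; rewrite big_cons hP.
Qed.

Variables (mu : {measure set T -> \bar R}) (mu_fin : (mu setT < +oo)%E).

Lemma cintegralD f g : cbmfun f -> cbmfun g ->
  cintegral mu (fun x => f x + g x) = cintegral mu f + cintegral mu g.
Proof.
move=> [f1 f2] [g1 g2]; rewrite /cintegral.
rewrite (_ : (fun t => Re (f t + g t)) = (fun t => Re (f t) + Re (g t))); last first.
  by apply: funext => x; case: (f x); case: (g x).
rewrite (_ : (fun t => Im (f t + g t)) = (fun t => Im (f t) + Im (g t))); last first.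
  by apply: funext => x; case: (f x); case: (g x).
by rewrite !RintegralD //; apply: bmfun_integrable.
Qed.

Lemma cintegralZ (k : R[i]) f : cbmfun f ->
  cintegral mu (fun x => k * f x) = k * cintegral mu f.
Proof.
move=> [f1 f2]; rewrite /cintegral; case: k => a b.
rewrite (_ : (fun t => Re ((a +i* b)%C * f t)) =
             (fun t => a * Re (f t) + - b * Im (f t))); last first.
  by apply: funext => x; case: (f x) => ? ? /=; rewrite mulNr.
rewrite (_ : (fun t => Im ((a +i* b)%C * f t)) =
             (fun t => a * Im (f t) + b * Re (f t))); last first.
  by apply: funext => x; case: (f x) => ? ? /=; rewrite addrC.
have hint h : bmfun h -> mu.-integrable setT (EFin \o h) by apply: bmfun_integrable.
rewrite !(RintegralD measurableT); try by apply/hint/bmfunM => //; apply: bmfun_cst.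
by rewrite !(RintegralZl _ measurableT) ?hint // mulNr.
Qed.

Lemma cintegral_sum (J : Type) (s : seq J) (P : pred J) (F : J -> T -> R[i]) :
  (forall j, P j -> cbmfun (F j)) ->
  cintegral mu (fun x => \sum_(j <- s | P j) F j x) =
  \sum_(j <- s | P j) cintegral mu (F j).
Proof.
move=> hF; elim: s => [|a s IH].
  under eq_fun do rewrite big_nil.
  by rewrite big_nil /cintegral /= Rintegral_cst // mul0r.
rewrite big_cons; case hP: (P a); last first.
  by under eq_fun do rewrite big_cons hP.
under eq_fun do rewrite big_cons hP.
by rewrite cintegralD ?IH //; [exact: hF | exact: cbmfun_sum].
Qed.

End ComplexBoundedMeasurable.

Section MatrixBoundedMeasurable.
Context {d : measure_display} {T : measurableType d} {R : realType}.

Lemma mxbmfun_cst m n (M : 'M[R[i]]_(m, n)) : mxbmfun (fun _ : T => M).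
Proof. by move=> a b; apply: cbmfun_cst. Qed.

Lemma mxbmfunM m n p (F : T -> 'M[R[i]]_(m, n)) (G : T -> 'M[R[i]]_(n, p)) :
  mxbmfun F -> mxbmfun G -> mxbmfun (fun t => F t *m G t).
Proof.
move=> hF hG a b; apply: cbmfun_eq _ => [|t]; last by rewrite mxE.
by apply: cbmfun_sum => k _; apply: cbmfunM.
Qed.

Lemma mxbmfunZ m n (k : T -> R[i]) (F : T -> 'M[R[i]]_(m, n)) :
  cbmfun k -> mxbmfun F -> mxbmfun (fun t => k t *: F t).
Proof. by move=> hk hF a b; apply: cbmfun_eq (cbmfunM hk (hF a b)) _ => t; rewrite mxE. Qed.

Lemma mxbmfun_adj m n (F : T -> 'M[R[i]]_(m, n)) :
  mxbmfun F -> mxbmfun (fun t => mxadj (F t)).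
Proof.
by move=> hF a b; apply: cbmfun_eq (cbmfun_conj (hF b a)) _ => t; rewrite !mxE.
Qed.

Lemma mxbmfun_comp {d'} {T' : measurableType d'} (phi : T' -> T) m n
    (F : T -> 'M[R[i]]_(m, n)) :
  measurable_fun setT phi -> mxbmfun F -> mxbmfun (F \o phi).
Proof. by move=> mphi hF a b; exact: cbmfun_comp mphi (hF a b). Qed.

Lemma mxbmfun_kraus n (F : T -> 'M[R[i]]_n) (V W tau : 'M[R[i]]_n) :
  mxbmfun F -> mxbmfun (fun t => conjmap (mxadj (F t) *m V *m F t *m W) tau).
Proof.
move=> hF; have K_bm : mxbmfun (fun t => mxadj (F t) *m V *m F t *m W).
  apply: mxbmfunM (mxbmfun_cst _).
  exact: mxbmfunM (mxbmfunM (mxbmfun_adj hF) (mxbmfun_cst _)) hF.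
exact: mxbmfunM (mxbmfunM K_bm (mxbmfun_cst _)) (mxbmfun_adj K_bm).
Qed.

Variables (mu : {measure set T -> \bar R}) (mu_fin : (mu setT < +oo)%E).

Lemma mxintegral_sum m n (J : Type) (s : seq J) (P : pred J)
    (F : J -> T -> 'M[R[i]]_(m, n)) :
  (forall j, P j -> mxbmfun (F j)) ->
  mxintegral mu (fun t => \sum_(j <- s | P j) F j t) =
  \sum_(j <- s | P j) mxintegral mu (F j).
Proof.
move=> hF; apply/matrixP => a b; rewrite summxE mxE.
under eq_bigr do rewrite mxE.
rewrite -cintegral_sum //; last by move=> j /hF.
by under eq_fun do rewrite summxE.
Qed.

Lemma mxintegral_mull m n p (A : 'M[R[i]]_(m, n)) (F : T -> 'M[R[i]]_(n, p)) :
  mxbmfun F -> mxintegral mu (fun t => A *m F t) = A *m mxintegral mu F.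
Proof.
move=> hF; apply/matrixP => a b; rewrite !mxE.
under eq_fun do rewrite mxE.
rewrite cintegral_sum //; last by move=> k _; exact: (cbmfunZ (A a k) (hF k b)).
by apply: eq_bigr => k _; rewrite cintegralZ // mxE.
Qed.

Lemma mxintegral_mulr m n p (F : T -> 'M[R[i]]_(m, n)) (B : 'M[R[i]]_(n, p)) :
  mxbmfun F -> mxintegral mu (fun t => F t *m B) = mxintegral mu F *m B.
Proof.
move=> hF; apply/matrixP => a b; rewrite !mxE.
under eq_fun => t do rewrite mxE (eq_bigr _ (fun k _ => mulrC _ _)).
rewrite cintegral_sum //; last by move=> k _; exact: (cbmfunZ (B k b) (hF a k)).
by apply: eq_bigr => k _; rewrite cintegralZ // mxE mulrC.
Qed.

Lemma conjmap_mxintegral n (A : 'M[R[i]]_n) (F : T -> 'M[R[i]]_n) :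
  mxbmfun F -> conjmap A (mxintegral mu F) = mxintegral mu (fun t => conjmap A (F t)).
Proof.
move=> hF; rewrite /conjmap -mxintegral_mull // -mxintegral_mulr //.
exact: mxbmfunM (mxbmfun_cst _) hF.
Qed.

End MatrixBoundedMeasurable.

Lemma complex_of_realE (R : rcfType) (r : R) : complex_of_real r = (r%:C)%C.
Proof. by []. Qed.

Section Adjoint.
Context {R : rcfType}.

Lemma mxadjE m n (M : 'M[R[i]]_(m, n)) a b : mxadj M a b = (M b a)^*.
Proof. by rewrite !mxE. Qed.

Lemma mxadjM m n p (A : 'M[R[i]]_(m, n)) (B : 'M[R[i]]_(n, p)) :
  mxadj (A *m B) = mxadj B *m mxadj A.
Proof.
apply/matrixP => a b; rewrite mxadjE !mxE rmorph_sum.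
by apply: eq_bigr => k _; rewrite rmorphM mulrC !mxadjE.
Qed.

Lemma mxadjZ m n (k : R[i]) (A : 'M[R[i]]_(m, n)) : mxadj (k *: A) = k^* *: mxadj A.
Proof. by apply/matrixP => a b; rewrite !mxE rmorphM. Qed.

Lemma mxadjK m n (A : 'M[R[i]]_(m, n)) : mxadj (mxadj A) = A.
Proof. by apply/matrixP => a b; rewrite !mxadjE conjCK. Qed.

Lemma conjmapM n (A B tau : 'M[R[i]]_n) :
  conjmap (A *m B) tau = conjmap A (conjmap B tau).
Proof. by rewrite /conjmap mxadjM !mulmxA. Qed.

Lemma conjmapZ n (k : R[i]) (A tau : 'M[R[i]]_n) :
  conjmap (k *: A) tau = `|k| ^+ 2 *: conjmap A tau.
Proof. by rewrite /conjmap mxadjZ -!scalemxAl -scalemxAr scalerA normCK. Qed.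

Lemma conjmapZr n (A tau : 'M[R[i]]_n) (k : R[i]) :
  conjmap A (k *: tau) = k *: conjmap A tau.
Proof. by rewrite /conjmap -scalemxAr -scalemxAl. Qed.

Lemma conjmap_equivariant_twist n (Q Ri Rj Rg Ui Uj Uo tau : 'M[R[i]]_n) (ai aj : R[i]) :
  mxadj Ri *m Ri = 1%:M -> Ri *m mxadj Ri = 1%:M ->
  mxadj Ri *m Ui *m Ri = ai *: Uo -> mxadj Rj *m Uj *m Rj = aj *: Uo ->
  `|ai| = 1 -> `|aj| = 1 -> Q = Rj *m Rg *m mxadj Ri ->
  conjmap (mxadj Q *m Uj *m Q *m mxadj Ui) tau
  = conjmap Ri (conjmap (mxadj Rg *m Uo *m Rg *m mxadj Uo) (conjmap (mxadj Ri) tau)).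
Proof.
move=> Ri_unit Ri_unit' Ui_twist Uj_twist ai1 aj1 ->.
have Ui_adj : mxadj Ui = ai^* *: (Ri *m mxadj Uo *m mxadj Ri).
  have -> : Ui = Ri *m (mxadj Ri *m Ui *m Ri) *m mxadj Ri.
    by rewrite !mulmxA Ri_unit' mul1mx -mulmxA Ri_unit' mulmx1.
  by rewrite Ui_twist -scalemxAr -scalemxAl mxadjZ !mxadjM mxadjK mulmxA.
(* Ascribing [R[i]] to [k] makes [k *: _] use the scaling instance that [conjmapZ] matches. *)
pose k : R[i] := ai^* * aj.
have -> : mxadj (Rj *m Rg *m mxadj Ri) *m Uj *m (Rj *m Rg *m mxadj Ri) *m mxadj Ui
    = k *: (Ri *m (mxadj Rg *m Uo *m Rg *m mxadj Uo) *m mxadj Ri).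
  have -> : mxadj (Rj *m Rg *m mxadj Ri) *m Uj *m (Rj *m Rg *m mxadj Ri)
      = Ri *m mxadj Rg *m (mxadj Rj *m Uj *m Rj) *m Rg *m mxadj Ri.
    by rewrite !mxadjM mxadjK !mulmxA.
  rewrite Uj_twist Ui_adj; do ![rewrite -scalemxAr | rewrite -scalemxAl].
  by rewrite scalerA !mulmxA -(mulmxA _ (mxadj Ri) Ri) Ri_unit mulmx1.
by rewrite conjmapZ normrM norm_conjC ai1 aj1 mulr1 expr1n scale1r !conjmapM.
Qed.

End Adjoint.

Lemma unitary_entry_bound (R : rcfType) n (A : 'M[R[i]]_n) a b :
  mxadj A *m A = 1%:M -> Re (A a b) ^+ 2 + Im (A a b) ^+ 2 <= 1.
Proof.
move=> A_unit; rewrite -lecR add_Re2_Im2.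
have col_norm : \sum_k `|A k b| ^+ 2 = (mxadj A *m A) b b.
  by rewrite mxE; apply: eq_bigr => k _; rewrite mxadjE normCKC.
rewrite A_unit mxE eqxx /= in col_norm.
apply: (le_trans (y := \sum_k `|A k b| ^+ 2)); last by rewrite col_norm; exact: lexx.
by rewrite (bigD1 a) //= lerDl sumr_ge0 // => k _; rewrite exprn_ge0.
Qed.

Lemma norm_le1_sqrD (R : realDomainType) (x y : R) : x ^+ 2 + y ^+ 2 <= 1 -> `|x| <= 1.
Proof.
move=> h; rewrite -(@expr_le1 _ 2) // real_normK ?num_real // (le_trans _ h) //.
by rewrite lerDl sqr_ge0.
Qed.

Lemma mxbmfun_unitary d (T : measurableType d) (R : realType) n (F : T -> 'M[R[i]]_n) :
  (forall t, mxadj (F t) *m F t = 1%:M) ->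
  (forall a b, measurable_fun setT (fun t => Re (F t a b)) /\
               measurable_fun setT (fun t => Im (F t a b))) ->
  mxbmfun F.
Proof.
move=> F_unit F_meas a b; have bound t := unitary_entry_bound a b (F_unit t).
split; split; try exact: (F_meas a b).1; try exact: (F_meas a b).2.
- by exists 1 => t; apply: norm_le1_sqrD (bound t).
- by exists 1 => t; apply: (@norm_le1_sqrD _ _ (Re (F t a b))); rewrite addrC.
Qed.

Lemma Re_realM (R : rcfType) (r : R) (z : R[i]) : Re (complex_of_real r * z) = r * Re z.
Proof. by case: z => x y /=; rewrite mul0r subr0. Qed.

Lemma Im_realM (R : rcfType) (r : R) (z : R[i]) : Im (complex_of_real r * z) = r * Im z.
Proof. by case: z => x y /=; rewrite mul0r addr0. Qed.

Section ProbabilityIntegrals.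
Context {R : realType}.

Lemma probability_setT_lty d (T : measurableType d) (P : probability T R) :
  (P setT < +oo)%E.
Proof. by rewrite probability_setT ltry. Qed.

Lemma product_probability_setT_lty d1 d2 (T1 : measurableType d1)
    (T2 : measurableType d2) (P1 : probability T1 R) (P2 : probability T2 R) :
  ((P1 \x P2)%E setT < +oo)%E.
Proof.
have P1_fin := probability_setT_lty P1; have P2_fin := probability_setT_lty P2.
by rewrite -setXTT product_measure1E // lte_mul_pinfty // ge0_fin_numE.
Qed.

Lemma cbmfun_xsection d1 d2 (T1 : measurableType d1) (T2 : measurableType d2)
    (P : probability T2 R) (S : set (T1 * T2)) :
  measurable S -> cbmfun (fun x => complex_of_real (fine (P (xsection S x)))).
Proof.
move=> mS; apply: cbmfun_real; split.
  exact: measurableT_comp (measurable_fun_xsection P mS).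
exists 1 => x; have PS_ge0 : (0 <= P (xsection S x))%E by [].
have PS_le1 : (P (xsection S x) <= 1)%E by apply: probability_le1; exact: measurable_xsection.
rewrite ger0_norm ?fine_ge0 // -lee_fin fineK //.
by rewrite ge0_fin_numE // (le_lt_trans PS_le1) ?ltry.
Qed.

Lemma Rintegral_indic_fst d1 d2 (T1 : measurableType d1) (T2 : measurableType d2)
    (P1 : probability T1 R) (P2 : probability T2 R) (S : set (T1 * T2)) (f : T1 -> R) :
  measurable S -> bmfun f ->
  Rintegral (P1 \x P2)%E setT (fun q => \1_S q * f q.1) =
  Rintegral P1 setT (fun x => fine (P2 (xsection S x)) * f x).
Proof.
move=> mS bf; have mxS x : measurable (xsection S x) by exact: measurable_xsection.
rewrite /Rintegral -integral12_prod_meas1; last first.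
  apply: bmfun_integrable; first exact: product_probability_setT_lty.
  exact: (bmfunM (bmfun_indic mS) (bmfun_comp measurable_fst bf)).
congr fine; apply: eq_integral => x _; rewrite /fubini_F.
have indic_xsection y : \1_S (x, y) = \1_(xsection S x) y :> R.
  by rewrite /indic mem_xsection.
under eq_fun do rewrite /= EFinM indic_xsection.
rewrite integralZr ?integral_indic ?setIT //; last first.
  exact: (bmfun_integrable (probability_setT_lty _) (bmfun_indic (mxS x))).
rewrite EFinM fineK // ge0_fin_numE //.
exact: (le_lt_trans (probability_le1 _ (mxS x)) (ltry 1)).
Qed.

Lemma mxintegral_indic_fst d1 d2 (T1 : measurableType d1) (T2 : measurableType d2)
    (P1 : probability T1 R) (P2 : probability T2 R) (S : set (T1 * T2)) m n
    (F : T1 -> 'M[R[i]]_(m, n)) :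
  measurable S -> mxbmfun F ->
  mxintegral (P1 \x P2)%E (fun q => complex_of_real (\1_S q) *: F q.1) =
  mxintegral P1 (fun x => complex_of_real (fine (P2 (xsection S x))) *: F x).
Proof.
move=> mS hF; apply/matrixP => a b; rewrite !mxE /cintegral.
have [Re_F Im_F] := hF a b.
under eq_fun do rewrite mxE Re_realM; under [in RHS]eq_fun do rewrite mxE Re_realM.
under [in X in Complex _ X]eq_fun do rewrite mxE Im_realM.
under [in X in _ = Complex _ X]eq_fun do rewrite mxE Im_realM.
by congr Complex;
  [exact: (Rintegral_indic_fst _ _ mS Re_F) | exact: (Rintegral_indic_fst _ _ mS Im_F)].
Qed.

Lemma Rintegral_pushforward d1 d2 (T1 : measurableType d1) (T2 : measurableType d2)
    (mu : {measure set T1 -> \bar R}) (nu : {measure set T2 -> \bar R})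
    (phi : T1 -> T2) (f : T2 -> R) :
  (mu setT < +oo)%E -> measurable_fun setT phi ->
  (forall A, measurable A -> mu (phi @^-1` A) = nu A) -> bmfun f ->
  Rintegral mu setT (f \o phi) = Rintegral nu setT f.
Proof.
move=> mu_fin mphi phi_nu bf; rewrite /Rintegral; congr fine.
have mf : measurable_fun setT (EFin \o f) by apply/measurable_EFinP; case: bf.
have := integral_pushforward mphi mf _ measurableT.
rewrite preimage_setT => <-; last exact: bmfun_integrable (bmfun_comp mphi bf).
by apply: eq_measure_integral => A mA _; exact: phi_nu.
Qed.

Lemma mxintegral_pushforward d1 d2 (T1 : measurableType d1) (T2 : measurableType d2)
    (mu : {measure set T1 -> \bar R}) (nu : {measure set T2 -> \bar R})
    (phi : T1 -> T2) m n (F : T2 -> 'M[R[i]]_(m, n)) :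
  (mu setT < +oo)%E -> measurable_fun setT phi ->
  (forall A, measurable A -> mu (phi @^-1` A) = nu A) -> mxbmfun F ->
  mxintegral mu (F \o phi) = mxintegral nu F.
Proof.
move=> mu_fin mphi phi_nu hF; apply/matrixP => a b; rewrite !mxE /cintegral.
have [Re_F Im_F] := hF a b.
by congr Complex; exact: (Rintegral_pushforward mu_fin mphi phi_nu).
Qed.

End ProbabilityIntegrals.

Lemma conjmap_Ureading (R : realType) (C : Type) (I : finType) n (Ik : {set I})
    (D : I -> set C) (U : I -> 'M[R[i]]_n) (A B tau : 'M[R[i]]_n) (x : C) :
  {in Ik &, forall j k, j != k -> D j `&` D k = set0} ->
  conjmap (A *m Ureading Ik D U x *m B) tau =
  \sum_(j in Ik) complex_of_real (\1_(D j) x) *: conjmap (A *m U j *m B) tau.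
Proof.
move=> D_disj; rewrite /Ureading.
have [[j0 j0_Ik Dj0x]|no_cell] := pselect (exists2 j, j \in Ik & D j x); last first.
  have indic0 j : j \in Ik -> complex_of_real (\1_(D j) x) = 0.
    by move=> j_Ik; rewrite indicE memNset // => Djx; apply: no_cell; exists j.
  rewrite big1 => [|j /indic0 ->]; last exact: scale0r.
  rewrite big1 => [|j /indic0 ->]; last exact: scale0r.
  by rewrite mulmx0 mul0mx /conjmap !mul0mx.
have indic_cell j : j \in Ik -> complex_of_real (\1_(D j) x) = (j == j0)%:R.
  move=> j_Ik; have [->|neq] := eqVneq j j0; first by rewrite indicE mem_set.
  rewrite indicE memNset // => Djx; have DjDj0x : (D j `&` D j0) x by [].
  by rewrite D_disj in DjDj0x.
rewrite (bigD1 j0) //= big1 => [|j /andP[/indic_cell -> /negbTE ->]]; last exact: scale0r.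
rewrite (bigD1 j0) //= big1 => [|j /andP[/indic_cell -> /negbTE ->]]; last exact: scale0r.
by rewrite indic_cell // eqxx !scale1r !addr0.
Qed.

Lemma measurable_preimageT d d' (T : measurableType d) (T' : measurableType d')
    (f : T -> T') (A : set T') :
  measurable_fun setT f -> measurable A -> measurable (f @^-1` A).
Proof. by move=> mf mA; rewrite -[_ @^-1` _]setTI; exact: mf. Qed.

Lemma xsection_act (G C : Type) (act : G -> C -> C) (A B : set C) (g : G) :
  xsection (snd @^-1` A `&` (fun q : G * C => act q.1 q.2) @^-1` B) g =
  A `&` act g @^-1` B.
Proof.
rewrite xsectionI xsection_preimage_snd; congr (_ `&` _).
by apply/seteqP; split=> x; rewrite /xsection /= in_setE.
Qed.

Lemma measurable_act_pair d d' (G : measurableType d) (C : measurableType d')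
    (act : G -> C -> C) (A B : set C) :
  measurable_fun setT (fun q : G * C => act q.1 q.2) -> measurable A -> measurable B ->
  measurable (snd @^-1` A `&` (fun q : G * C => act q.1 q.2) @^-1` B).
Proof.
move=> act_meas mA mB; apply: measurableI; last exact: measurable_preimageT.
exact: measurable_preimageT measurable_snd mA.
Qed.

Section GroupAction.
Context {G C : Type} {mul : G -> G -> G} {inv : G -> G} {one : G} {act : G -> C -> C}.
Hypotheses (mulA : forall a b c, mul a (mul b c) = mul (mul a b) c)
  (mul1g : forall a, mul one a = a) (mulVg : forall a, mul (inv a) a = one).
Hypotheses (act_one : forall x, act one x = x)
  (act_mul : forall g h x, act (mul g h) x = act g (act h x)).

Lemma mulgVr g : mul g (inv g) = one.
Proof.
have mulVVg := mulVg (inv g).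
by rewrite -[LHS]mul1g -{1}mulVVg -mulA (mulA (inv g)) mulVg mul1g mulVVg.
Qed.

Lemma invgK : involutive inv.
Proof.
move=> g; have mulg1 h : mul h one = h by rewrite -(mulVg h) mulA mulgVr mul1g.
by rewrite -[LHS]mulg1 -(mulVg g) mulA mulVg mul1g.
Qed.

Lemma actK g : cancel (act g) (act (inv g)).
Proof. by move=> x; rewrite -act_mul mulVg act_one. Qed.

End GroupAction.

Section EncodingScheme.
Context {R : realType} {dC : measure_display} {C : measurableType dC}
  {muC : probability C R} {G : Type} {I : finType} {mul : G -> G -> G} {inv : G -> G}
  {act : G -> C -> C} {H : set G} {sigma : I -> G -> I} {Ik : {set I}} {o : I}
  {D : I -> set C} {c : I -> G}.
Hypotheses (invK : involutive inv) (actK : forall g, cancel (act g) (act (inv g)))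
  (act_mul : forall g h x, act (mul g h) x = act g (act h x))
  (H_inv : forall h, H h -> H (inv h))
  (sigma_Ik : forall j h, j \in Ik -> H h -> sigma j h \in Ik) (o_Ik : o \in Ik)
  (D_disj : {in Ik &, forall j k, j != k -> D j `&` D k = set0})
  (D_cover : muC [set x | forall j, j \in Ik -> ~ D j x] = 0%E)
  (D_compat : forall h j, H h -> j \in Ik -> act h @` D j = D (sigma j (inv h)))
  (c_H : forall j, j \in Ik -> H (c j))
  (c_E : forall j, j \in Ik -> act (c j) @` D o = D j).

Lemma image_act g (A : set C) : act g @` A = act (inv g) @^-1` A.
Proof.
apply/seteqP; split=> [_ [x Ax <-]|y Ay]; first by rewrite /preimage /= actK.
by exists (act (inv g) y) => //; have := actK (inv g) y; rewrite invK.
Qed.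

Lemma preimage_act_conj a b g (B : set C) :
  act (mul b (mul g (inv a))) @^-1` (act (inv b) @^-1` B) =
  act (inv a) @^-1` (act g @^-1` B).
Proof. by apply/seteqP; split=> x; rewrite /preimage /= !act_mul actK. Qed.

Lemma cell_preimage j : j \in Ik -> D j = act (inv (c j)) @^-1` D o.
Proof. by move=> j_Ik; rewrite -c_E // image_act. Qed.

(* Every cell is a translate of [D o]: were [D o] empty, nothing would be covered. *)
Lemma cell0_nonempty : D o !=set0.
Proof.
apply/set0P/negP => /eqP Do0; move: D_cover.
have -> : [set x | forall j, j \in Ik -> ~ D j x] = setT.
  by apply/seteqP; split=> // x _ j /cell_preimage ->; rewrite Do0.
by rewrite probability_setT => /eqP; rewrite onee_eq0.
Qed.

Lemma sigma_cell j : j \in Ik -> sigma j (c j) = o.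
Proof.
move=> j_Ik; have sigma_j_Ik : sigma j (c j) \in Ik by apply: sigma_Ik => //; exact: c_H.
have D_sigma : D (sigma j (c j)) = D o.
  have cjV_H : H (inv (c j)) by apply/H_inv/c_H.
  rewrite -[c j]invK -(D_compat cjV_H j_Ik) (cell_preimage j_Ik) image_act invK.
  by apply/seteqP; split=> x; rewrite /preimage /= actK.
apply/eqP; apply: contraT => neq; have [x Dox] := cell0_nonempty.
by have := D_disj sigma_j_Ik o_Ik neq; rewrite D_sigma setIid => /seteqP[/(_ x Dox)].
Qed.

Lemma xsection_cells_conj i j g : i \in Ik -> j \in Ik ->
  xsection (snd @^-1` D i `&` (fun q : G * C => act q.1 q.2) @^-1` D j)
           (mul (c j) (mul g (inv (c i)))) =
  act (inv (c i)) @^-1` (D o `&` act g @^-1` D o).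
Proof.
move=> i_Ik j_Ik; rewrite xsection_act (cell_preimage i_Ik) (cell_preimage j_Ik).
by rewrite preimage_act_conj preimage_setI.
Qed.

End EncodingScheme.

Section HaarMeasure.
Context {R : realType} {dG : measure_display} {G : measurableType dG}
  {mul : G -> G -> G} {muG : probability G R}.
Hypotheses (mul_meas : measurable_fun setT (fun p : G * G => mul p.1 p.2))
  (haar_left : forall g A, measurable A -> muG (mul g @^-1` A) = muG A)
  (haar_right : forall g A, measurable A -> muG ((fun x => mul x g) @^-1` A) = muG A).

Lemma mxintegral_haar_translate a b m n (F : G -> 'M[R[i]]_(m, n)) :
  mxbmfun F -> mxintegral muG (fun g => F (mul a (mul g b))) = mxintegral muG F.
Proof.
have mul_l x : measurable_fun setT (mul x) := measurableT_comp mul_meas (pair1_measurable x).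
have mul_r y : measurable_fun setT (fun x => mul x y) :=
  measurableT_comp mul_meas (pair2_measurable y).
apply: (mxintegral_pushforward (probability_setT_lty muG)
  (measurableT_comp (mul_l a) (mul_r b))) => A mA.
transitivity (muG (mul a @^-1` A)); last exact: haar_left.
exact: haar_right (measurable_preimageT (mul_l a) mA).
Qed.

End HaarMeasure.

Theorem theorem3p12
  (R : realType)
  (* the compact group G, with its Borel structure, group law and Haar measure *)
  (dG : measure_display) (G : measurableType dG)
  (mul : G -> G -> G) (inv : G -> G) (one : G)
  (mulA : forall a b c, mul a (mul b c) = mul (mul a b) c)
  (mul1g : forall a, mul one a = a)
  (mulVg : forall a, mul (inv a) a = one)
  (mul_meas : measurable_fun [set: G * G] (fun p : G * G => mul p.1 p.2))
  (inv_meas : measurable_fun [set: G] inv)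
  (muG : probability G R)
  (haar_left : forall g A, measurable A -> muG ((mul g) @^-1` A) = muG A)
  (haar_right : forall g A, measurable A ->
     muG ((fun x => mul x g) @^-1` A) = muG A)
  (haar_inv : forall A, measurable A -> muG (inv @^-1` A) = muG A)
  (* the unitary representation rho : G -> U(V), V = C^d *)
  (d : nat) (rho : G -> 'M[R[i]]_d)
  (rho_mul : forall g h, rho (mul g h) = rho g *m rho h)
  (rho_one : rho one = 1%:M)
  (rho_unitary : forall g, mxadj (rho g) *m rho g = 1%:M /\
                           rho g *m mxadj (rho g) = 1%:M)
  (rho_meas : forall a b,
     measurable_fun [set: G] (fun g => complex.Re (rho g a b)) /\
     measurable_fun [set: G] (fun g => complex.Im (rho g a b)))
  (* the unitary error basis {U_i}_{i in I} *)
  (I : finType) (cardI : #|I| = (d ^ 2)%N) (U : I -> 'M[R[i]]_d)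
  (U_unitary : forall i, mxadj (U i) *m U i = 1%:M /\
                         U i *m mxadj (U i) = 1%:M)
  (U_orth : forall i j,
     complex_of_real (d%:R^-1) * \tr (mxadj (U i) *m U j) = (i == j)%:R)
  (* the finite subgroup H and the H-equivariance of the UEB *)
  (H : set G) (H_fin : finite_set H) (H_one : H one)
  (H_mul : forall g h, H g -> H h -> H (mul g h))
  (H_inv : forall h, H h -> H (inv h))
  (sigma : I -> G -> I) (alpha : I -> G -> R[i])
  (sigma_one : forall i, sigma i one = i)
  (sigma_mul : forall i h h', H h -> H h' ->
     sigma (sigma i h) h' = sigma i (mul h h'))
  (alpha_unit : forall i h, H h -> `|alpha i h| = 1)
  (equivariant : forall i h, H h ->
     mxadj (rho h) *m U i *m rho h = alpha i h *: U (sigma i h))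
  (* the space C with its measure and measure-preserving left G-action *)
  (dC : measure_display) (C : measurableType dC) (muC : probability C R)
  (act : G -> C -> C)
  (act_one : forall x, act one x = x)
  (act_mul : forall g h x, act (mul g h) x = act g (act h x))
  (act_meas : measurable_fun [set: G * C] (fun p : G * C => act p.1 p.2))
  (act_preserving : forall g A, measurable A ->
     muC ((act g) @^-1` A) = muC A)
  (* the orbit I_k of sigma, with fixed element o (the "0" of the paper) *)
  (Ik : {set I}) (o : I)
  (Ik_orbit : forall i, i \in Ik <-> exists2 h, H h & i = sigma o h)
  (* a tight compatible encoding scheme {D_i}_{i in I_k}; E_i := D_i *)
  (D : I -> set C)
  (D_meas : forall i, i \in Ik -> measurable (D i))
  (D_disj : forall i j, i \in Ik -> j \in Ik -> i != j -> D i `&` D j = set0)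
  (D_cover : muC [set x | forall i, i \in Ik -> ~ D i x] = 0%E)
  (D_compat : forall h i, H h -> i \in Ik ->
     (act h) @` (D i) = D (sigma i (inv h)))
  (* the chosen elements c_i in H with c_i . E_0 = E_i *)
  (c : I -> G)
  (c_H : forall i, i \in Ik -> H (c i))
  (c_E : forall i, i \in Ik -> (act (c i)) @` (D o) = D i)
  (i : I) (i_Ik : i \in Ik) (tau : 'M[R[i]]_d) :
  let E := D in
  let Ux := Ureading Ik D U in
  let p := fun g : G => fine (muC (E o `&` (act g) @^-1` (D o))) in
  (* T^k_i (tau) *)
  complex_of_real (fine (muC (E i)))^-1 *:
    mxintegral (muG \x muC)%E (fun q : G * C =>
      complex_of_real (\1_(E i) q.2) *:
        conjmap (mxadj (rho q.1) *m Ux (act q.1 q.2) *m rho q.1 *m mxadj (U i))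
                tau)
  =
  complex_of_real (#|Ik|%:R / fine (muC (E o))) *:
    conjmap (rho (c i))
      (mxintegral muG (fun g : G =>
         complex_of_real (p g) *:
           conjmap (mxadj (rho g) *m U o *m rho g *m mxadj (U o))
                   (conjmap (mxadj (rho (c i))) tau))).
Proof.
move=> E Ux p; rewrite /E /Ux.
have invK := invgK mulA mul1g mulVg.
have act_cancel := actK mulVg act_one act_mul.
have o_Ik : o \in Ik by apply/Ik_orbit; exists one; rewrite ?sigma_one.
have sigma_Ik j h : j \in Ik -> H h -> sigma j h \in Ik.
  move=> /Ik_orbit[h0 H_h0 ->] H_h; apply/Ik_orbit.
  by exists (mul h0 h); rewrite ?sigma_mul //; exact: H_mul.
have sigma_c := sigma_cell invK act_cancel H_inv sigma_Ik o_Ik D_disj D_cover D_compat c_H c_E.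
have U_twist j : j \in Ik -> mxadj (rho (c j)) *m U j *m rho (c j) = alpha j (c j) *: U o.
  by move=> j_Ik; rewrite equivariant ?sigma_c //; exact: c_H.
have rho_inv g : rho (inv g) = mxadj (rho g).
  by rewrite -[LHS]mulmx1 -(rho_unitary g).2 mulmxA -rho_mul mulVg rho_one mul1mx.
have rho_bm := mxbmfun_unitary (fun g => (rho_unitary g).1) rho_meas.
have kraus_bm V W t := mxbmfun_kraus V W t rho_bm.
pose S j := snd @^-1` D i `&` (fun q : G * C => act q.1 q.2) @^-1` D j.
have S_meas j : j \in Ik -> measurable (S j).
  by move=> j_Ik; apply: measurable_act_pair act_meas (D_meas i i_Ik) (D_meas j j_Ik).
pose M j g := conjmap (mxadj (rho g) *m U j *m rho g *m mxadj (U i)) tau.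
pose Y g := conjmap (mxadj (rho g) *m U o *m rho g *m mxadj (U o))
                    (conjmap (mxadj (rho (c i))) tau).
have p_bm : cbmfun (fun g => complex_of_real (p g)).
  have S0_meas := measurable_act_pair act_meas (D_meas o o_Ik) (D_meas o o_Ik).
  by apply: cbmfun_eq (cbmfun_xsection muC S0_meas) _ => g; rewrite xsection_act.
have integrand : (fun q : G * C => complex_of_real (\1_(D i) q.2) *:
    conjmap (mxadj (rho q.1) *m Ureading Ik D U (act q.1 q.2) *m rho q.1 *m mxadj (U i)) tau)
  = (fun q => \sum_(j in Ik) complex_of_real (\1_(S j) q) *: M j q.1).
  apply: funext => -[g x]; rewrite -mulmxA conjmap_Ureading // scaler_sumr.
  by apply: eq_bigr => j _; rewrite scalerA mulmxA /S indicI !complex_of_realE -rmorphM.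
have term j : j \in Ik ->
    mxintegral muG (fun g => complex_of_real (fine (muC (xsection (S j) g))) *: M j g) =
    mxintegral muG (fun g => conjmap (rho (c i)) (complex_of_real (p g) *: Y g)).
  move=> j_Ik.
  rewrite -(mxintegral_haar_translate mul_meas haar_left haar_right (c j) (inv (c i))).
    2: exact: mxbmfunZ (cbmfun_xsection muC (S_meas j j_Ik)) (kraus_bm _ _ _).
  congr mxintegral; apply: funext => g /=; rewrite conjmapZr; congr (_ *: _).
    rewrite (xsection_cells_conj invK act_cancel act_mul c_E) // act_preserving //.
    apply: measurableI (D_meas o o_Ik) (measurable_preimageT _ (D_meas o o_Ik)).
    exact: measurableT_comp act_meas (pair1_measurable g).
  have rho_twist :
      rho (mul (c j) (mul g (inv (c i)))) = rho (c j) *m rho g *m mxadj (rho (c i)).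
    by rewrite !rho_mul rho_inv mulmxA.
  have alpha_c k : k \in Ik -> `|alpha k (c k)| = 1 by move=> k_Ik; exact/alpha_unit/c_H.
  exact: (conjmap_equivariant_twist tau (rho_unitary (c i)).1 (rho_unitary (c i)).2
    (U_twist i i_Ik) (U_twist j j_Ik) (alpha_c i i_Ik) (alpha_c j j_Ik) rho_twist).
have summand_bm j : j \in Ik ->
    mxbmfun (fun q : G * C => complex_of_real (\1_(S j) q) *: M j q.1).
  move=> j_Ik; apply: mxbmfunZ (mxbmfun_comp measurable_fst (kraus_bm _ _ _)).
  exact: cbmfun_real (bmfun_indic (S_meas j j_Ik)).
rewrite integrand (mxintegral_sum (product_probability_setT_lty muG muC) _ summand_bm).
rewrite (eq_bigr _ (fun j j_Ik =>
  mxintegral_indic_fst muG muC (S_meas j j_Ik) (kraus_bm _ _ _))).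
rewrite (eq_bigr _ term) sumr_const -scaler_nat scalerA.
rewrite (conjmap_mxintegral (probability_setT_lty muG) _ (mxbmfunZ p_bm (kraus_bm _ _ _))).
have muDi : muC (D i) = muC (D o).
  by rewrite (cell_preimage invK act_cancel c_E i_Ik) act_preserving //; exact: D_meas.
by rewrite muDi !complex_of_realE rmorphM rmorph_nat mulrC.
Qed.
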